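(* Let $P_Z=\mathcal N(0,I)$ on $\mathbb{R}^s$ and let $\mathcal T\colon\mathbb{R}^s\to\mathbb{R}^s$ be a bi-Lipschitz diffeomorphism, i.e. $\mathrm{Lip}(\mathcal T)<\infty$ and $\mathrm{Lip}(\mathcal T^{-1})<\infty$. Let $P_1,\dots,P_{N_p}\colon\mathbb{R}^d\to\mathbb{R}^s$ be patch-extraction operators, each selecting a fixed set of $s$ distinct coordinates of $x\in\mathbb{R}^d$, such that every coordinate $k\in\{1,\dots,d\}$ is selected by at least one $P_i$. Define $$\mathrm{patchNR}(x)=\frac{1}{s}\sum_{i=1}^{N_p}-\log\big(p_{\mathcal T_\#P_Z}(P_i(x))\big),\qquad x\in\mathbb{R}^d.$$ Then for every $\rho>0$, the function $\varphi(x)=\exp(-\rho\,\mathrm{patchNR}(x))$ belongs to $L^1(\mathbb{R}^d)$.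
   Context: $\mathcal T_\#P_Z=P_Z\circ\mathcal T^{-1}$ is the push-forward of $P_Z$ under $\mathcal T$, with density $p_{\mathcal T_\#P_Z}(\mathrm p)=p_Z(\mathcal T^{-1}(\mathrm p))\,|\det(\nabla\mathcal T^{-1}(\mathrm p))|$, where $p_Z$ is the standard normal density on $\mathbb{R}^s$. Images are vectorized as elements of $\mathbb{R}^d$, patches as elements of $\mathbb{R}^s$. *)

From HB Require Import structures.
From mathcomp Require Import all_boot all_order all_algebra.
From mathcomp Require Import all_classical all_reals all_analysis.
Set Implicit Arguments. Unset Strict Implicit. Unset Printing Implicit Defensive.
Import Order.TTheory GRing.Theory Num.Theory.
Import numFieldNormedType.Exports.
Local Open Scope classical_set_scope.
Local Open Scope ring_scope.

Section defs.
Variable R : realType.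

(** Vectors of R^n are row vectors 'rV[R]_n (normed space, max norm). *)

Definition row_of_tuple n (t : n.-tuple R) : 'rV[R]_n := \row_i tnth t i.

(** For nonnegative measurable functions this is (Tonelli) the integral
    against n-dimensional Lebesgue measure. *)
Fixpoint iter_lebesgue_integral (n : nat) : (n.-tuple R -> \bar R) -> \bar R :=
  match n with
  | 0%N => fun f => f [tuple]
  | n'.+1 => fun f =>
      (\int[@lebesgue_measure R]_(x in [set: R])
          iter_lebesgue_integral (fun t : n'.-tuple R => f (cons_tuple x t)))%E
  end.

(** f belongs to L^1(R^n): f is Borel measurable (the product sigma-algebra
    on n.-tuple R is the Borel sigma-algebra of R^n) and \int |f| < oo. *)
Definition L1 n (f : 'rV[R]_n -> R) : Prop :=
  measurable_fun [set: n.-tuple R] (fun t => f (row_of_tuple t)) /\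
  (iter_lebesgue_integral (fun t => (`| f (row_of_tuple t) |)%:E) < +oo)%E.

(** Lip(f) < oo is the library notion [lipschitz f x | x in setT],
    written `lipschitz f`. *)

Definition C1 n (f : 'rV[R]_n -> 'rV[R]_n) : Prop :=
  (forall x, differentiable f x) /\
  continuous (fun x => lin1_mx ('d f x) : 'M[R]_n).

Definition diffeomorphism n (T Tinv : 'rV[R]_n -> 'rV[R]_n) : Prop :=
  cancel T Tinv /\ cancel Tinv T /\ C1 T /\ C1 Tinv.

Definition jacobian_det n (f : 'rV[R]_n -> 'rV[R]_n) (p : 'rV[R]_n) : R :=
  \det (lin1_mx ('d f p)).

Definition std_normal_pdf n (z : 'rV[R]_n) : R :=
  (2 * pi) `^ (- (n%:R / 2)) * expR (- (\sum_j z ord0 j ^+ 2) / 2).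

(** Density of the push-forward T_# P_Z, with Tinv = T^{-1}. *)
Definition pushforward_pdf n (Tinv : 'rV[R]_n -> 'rV[R]_n) (p : 'rV[R]_n) : R :=
  std_normal_pdf (Tinv p) * `| jacobian_det Tinv p |.

Definition patch d s (idx : 'I_s -> 'I_d) (x : 'rV[R]_d) : 'rV[R]_s :=
  \row_j x ord0 (idx j).

Definition patchNR d s Np (idx : 'I_Np -> 'I_s -> 'I_d)
    (Tinv : 'rV[R]_s -> 'rV[R]_s) (x : 'rV[R]_d) : R :=
  s%:R^-1 * \sum_(i < Np) - ln (pushforward_pdf Tinv (patch (idx i) x)).

End defs.

From Pilot Require Import Defs.
From HB Require Import structures.
From mathcomp Require Import all_boot all_order all_algebra.
From mathcomp Require Import all_classical all_reals all_analysis.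
Import Order.TTheory GRing.Theory Num.Theory.
Import numFieldNormedType.Exports.
From mathcomp Require Import perm measurable_realfun ring lra.

(** Write [q] for the density of [T_# P_Z]. As [T] is Lipschitz,
    [|y - T 0| <= Lip(T) |Tinv y|], so the Gaussian factor of [q y] is at most
    [exp (- (y_j - (T 0)_j)^2 / (2 Lip(T)^2))] for every coordinate [j]; as [Tinv]
    is Lipschitz, the entries of its Jacobian matrix, hence its Jacobian
    determinant, are bounded. So every [ln q (P_i x)] is bounded above, and the one
    of a patch whose [j]-th coordinate is [x_k] is at most a constant minus
    [(x_k - (T 0)_j)^2 / (2 Lip(T)^2)]. Since every coordinate lies in some patch,
    averaging over [k] bounds [exp (- rho patchNR x)] by a constant times a product
    of one-dimensional Gaussian densities in the [x_k], whose iterated integral is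
    finite. Measurability comes from the continuity of [Tinv] and of its Jacobian
    matrix. *)

Set Implicit Arguments.
Unset Strict Implicit.
Unset Printing Implicit Defensive.

Local Open Scope ring_scope.
Local Open Scope classical_set_scope.

Section lipschitz_differential.
Variables (R : realType) (V W : normedModType R).

Lemma lipschitz_bound (f : V -> W) : lipschitz f ->
  exists2 L : R, 0 < L & forall x y, `|f x - f y| <= L * `|x - y|.
Proof.
move=> /pinfty_ex_gt0 [L L_gt0 fL]; exists L => // x y.
exact: (fL (x, y)).
Qed.

Lemma diff_norm_le (f : V -> W) (L : R) p v :
  (forall x y, `|f x - f y| <= L * `|x - y|) -> differentiable f p ->
  `|'d f p v| <= L * `|v|.
Proof.
move=> fL df; have fv := @diff_derivable _ _ _ f p v df.
rewrite -deriveE // /derive -lim_norm //.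
apply: limr_le; first by apply/cvg_ex; eexists; apply: cvg_norm; exact: fv.
near=> h.
have h_neq0 : h != 0 by near: h; exact: nbhs_dnbhs_neq.
have h_gt0 : 0 < `|h| by rewrite normr_gt0.
rewrite /= normrZ normfV ler_pdivrMl //.
by apply: le_trans (fL _ _) _; rewrite addrK normrZ mulrCA.
Unshelve. all: by end_near. Qed.

End lipschitz_differential.

Section jacobian_bounds.
Variable R : realType.

Lemma mx_norm_entry_le m n (M : 'M[R]_(m, n)) i j : `|M i j| <= `|M|.
Proof.
change (`|M i j| <= mx_norm M); rewrite mx_normrE.
exact: (le_bigmax _ _ (i, j)).
Qed.

Lemma mx_norm_delta_le1 n (i : 'I_n) : `|delta_mx 0 i : 'rV[R]_n| <= 1.
Proof.
change (mx_norm (delta_mx 0 i : 'rV[R]_n) <= 1); rewrite mx_normrE.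
apply: bigmax_le => [|[a b] _]; first exact: ler01.
by rewrite mxE /=; case: (_ && _); rewrite ?normr1 ?normr0.
Qed.

Lemma lin1_mx_diff_entry_le m n (f : 'rV[R]_m -> 'rV[R]_n) L p i j :
  0 <= L -> (forall x y, `|f x - f y| <= L * `|x - y|) -> differentiable f p ->
  `|lin1_mx ('d f p) i j| <= L.
Proof.
move=> L_ge0 fL df; rewrite mxE.
apply: le_trans; first exact: mx_norm_entry_le.
apply: le_trans; first exact: (diff_norm_le (delta_mx 0 i) fL df).
by rewrite ler_piMr // mx_norm_delta_le1.
Qed.

Lemma det_norm_le n (B : 'M[R]_n) L :
  (forall i j, `|B i j| <= L) -> `|\det B| <= n`!%:R * L ^+ n.
Proof.
move=> BL; apply: le_trans (ler_norm_sum _ _ _) _.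
rewrite -card_Sn mulr_natl -sumr_const; apply: ler_sum => sg _.
rewrite normrM normrX normrN1 expr1n mul1r normr_prod.
rewrite -[n in _ ^+ n]card_ord -prodr_const.
by apply: ler_prod => i _; rewrite normr_ge0 BL.
Qed.

Lemma jacobian_det_cancel n (f g : 'rV[R]_n -> 'rV[R]_n) x :
  cancel f g -> differentiable f x -> differentiable g (f x) ->
  jacobian_det f x * jacobian_det g (f x) = 1.
Proof.
move=> fK df dg; rewrite /jacobian_det -det_mulmx -[RHS](det1 R n); congr (\det _).
have dgf u : 'd g (f x) ('d f x u) = u.
  have gf_id : g \o f = id by apply/funext => y /=; rewrite fK.
  by rewrite -[LHS]/(('d g (f x) \o 'd f x) u) -diff_comp // gf_id diff_val.
apply/row_matrixP => i.
by rewrite !rowE mulmxA !mul_rV_lin1 dgf mulmx1.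
Qed.

Lemma jacobian_det_inv_bound n (T Tinv : 'rV[R]_n -> 'rV[R]_n) L :
  diffeomorphism T Tinv -> 0 <= L ->
  (forall x y, `|Tinv x - Tinv y| <= L * `|x - y|) ->
  forall p, 0 < `|jacobian_det Tinv p| <= n`!%:R * L ^+ n.
Proof.
move=> [TK [TinvK [[dT _] [dTinv _]]]] L_ge0 TinvL p; apply/andP; split.
  rewrite normr_gt0 -(TinvK p).
  have /eqP := jacobian_det_cancel TK (dT (Tinv p)) (dTinv _).
  by apply: contraTneq => ->; rewrite mulr0 eq_sym oner_eq0.
apply: det_norm_le => i j.
exact: lin1_mx_diff_entry_le.
Qed.

End jacobian_bounds.

Section measurable_continuous_comp.
Variables (R : realType) (d : measure_display) (T : measurableType d) (n : nat).
Variable f : T -> 'rV[R]_n.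
Hypothesis mf : forall j, measurable_fun setT (fun t => f t ord0 j).

(* Rational boxes form a countable base of the topology of ['rV[R]_n]. *)
Let rat_box (q : {ffun 'I_n -> rat} * nat) : set 'rV[R]_n :=
  [set p | forall j, `|p ord0 j - ratr (q.1 j)| < q.2.+1%:R^-1].

Let measurable_preimage_rat_box q : measurable (f @^-1` rat_box q).
Proof.
have -> : f @^-1` rat_box q = \bigcap_(j in [set: 'I_n])
    (setT `&` (fun t => f t ord0 j) @^-1`
       `](ratr (q.1 j) - q.2.+1%:R^-1), (ratr (q.1 j) + q.2.+1%:R^-1)[).
  apply/seteqP; split => t /= ft j.
    by move=> _; split => //; rewrite /= in_itv /= -ltr_distlC distrC ft.
  by have [_] := ft j I; rewrite /= in_itv /= -ltr_distlC distrC.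
apply: fin_bigcap_measurable; first exact: finite_finset.
by move=> j _; exact: mf.
Qed.

Let measurable_preimage_open (U : set 'rV[R]_n) : open U -> measurable (f @^-1` U).
Proof.
move=> oU.
have -> : f @^-1` U = \bigcup_q
   (if pselect (rat_box q `<=` U) is left _ then f @^-1` rat_box q else set0).
  apply/seteqP; split => [t Ut|t [q _]]; last by case: pselect => // qU /qU.
  have /nbhs_ballP [e e_gt0 eU] := oU _ Ut.
  have e2_gt0 : 0 < e / 2 by rewrite divr_gt0.
  have [N _ /(_ N (leqnn N)) /= N_lt] := near_infty_natSinv_lt (PosNum e2_gt0).
  set r := (N.+1%:R : R)^-1 in N_lt.
  have r_gt0 : 0 < r by rewrite invr_gt0 ltr0n.
  have /choice [g g_near] : forall j, exists qj : rat, `|f t ord0 j - ratr qj| < r.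
    move=> j; have lt_ftj : f t ord0 j - r < f t ord0 j + r.
      by rewrite ltrBlDr -addrA ltrDl addr_gt0.
    by have [qj] := rat_in_itvoo lt_ftj; rewrite in_itv /= -ltr_distlC; exists qj.
  exists ([ffun j => g j], N) => //.
  case: pselect => /= [_|]; last first.
    apply => p /= p_near; apply: eU; rewrite -ball_normE /=.
    change (mx_norm (f t - p) < e); rewrite mx_normrE.
    apply: bigmax_lt => // -[i j] _ /=; rewrite !mxE (ord1 i).
    have := p_near j; rewrite ffunE => p_nearj.
    apply: le_lt_trans (ler_distD (ratr (g j)) _ _) _.
    rewrite (splitr e); apply: ltrD; first exact: lt_trans (g_near j) N_lt.
    by rewrite distrC; exact: lt_trans p_nearj N_lt.
  by move=> j; rewrite ffunE; exact: g_near.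
apply: countable_bigcupT_measurable; first exact: countableP.
by move=> q; case: pselect => _ //; exact: measurable_preimage_rat_box.
Qed.

Lemma measurable_continuous_comp (h : 'rV[R]_n -> R) :
  continuous h -> measurable_fun setT (h \o f).
Proof.
move=> /continuousP ch.
apply: (measurability _ (RGenOpens.measurableE R)).
move=> _ [_ [a [b ->] <-]]; rewrite setTI comp_preimage.
by apply: measurable_preimage_open; apply: ch; exact: interval_open.
Qed.

End measurable_continuous_comp.

Lemma measurable_pushforward_pdf (R : realType) (d : measure_display)
    (T : measurableType d) s (Tinv : 'rV[R]_s -> 'rV[R]_s) (f : T -> 'rV[R]_s) :
  C1 Tinv -> (forall j, measurable_fun setT (fun t => f t ord0 j)) ->
  measurable_fun setT (pushforward_pdf Tinv \o f).
Proof.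
move=> [dTinv cJ] mf.
have coordT j : continuous (fun p : 'rV[R]_s => Tinv p ord0 j).
  move=> p; apply: (@continuous_comp _ _ _ Tinv (fun M : 'rV[R]_s => M ord0 j)).
    exact: differentiable_continuous.
  exact: coord_continuous.
have coordJ i j : continuous (fun p : 'rV[R]_s => lin1_mx ('d Tinv p) i j).
  move=> p; apply: (@continuous_comp _ _ _ (fun x => lin1_mx ('d Tinv x))
                                           (fun M : 'M[R]_s => M i j)).
    exact: cJ.
  exact: coord_continuous.
rewrite /pushforward_pdf /std_normal_pdf; apply: measurable_funM.
  apply: measurable_funM => //; apply: measurableT_comp => //.
  apply: measurable_funM => //; apply: measurable_funN.
  apply: measurable_sum => j; apply: measurable_funX.
  exact: measurable_continuous_comp (coordT j).
apply: measurableT_comp; first exact: normr_measurable.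
apply: measurable_sum => sg; apply: measurable_funM => //.
apply: measurable_prod => i _.
exact: measurable_continuous_comp (coordJ i (sg i)).
Qed.

Lemma measurable_patchNR (R : realType) d s Np (idx : 'I_Np -> 'I_s -> 'I_d)
    (Tinv : 'rV[R]_s -> 'rV[R]_s) :
  C1 Tinv -> measurable_fun [set: d.-tuple R] (patchNR idx Tinv \o @row_of_tuple R d).
Proof.
move=> C1Tinv; apply: measurable_funM => //.
apply: measurable_sum => i; apply: measurable_funN.
apply: measurableT_comp; first exact: measurable_ln.
have mpatch (j : 'I_s) : measurable_fun setT
    (fun t : d.-tuple R => Defs.patch (idx i) (row_of_tuple t) ord0 j).
  by rewrite /Defs.patch /row_of_tuple; under eq_fun do rewrite !mxE; exact: measurable_tnth.
exact: measurable_pushforward_pdf C1Tinv mpatch.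
Qed.

Section gaussian_bounds.
Variable R : realType.

Lemma mx_norm_sqr_le_sumsq n (z : 'rV[R]_n) : `|z| ^+ 2 <= \sum_j z ord0 j ^+ 2.
Proof.
have [z0|] := eqVneq (mx_norm z) 0.
  rewrite [`|z|]z0 expr0n /=; apply: sumr_ge0 => j _; exact: sqr_ge0.
move=> /mx_norm_neq0 [[i j] /= zij]; rewrite [`|z|]zij (ord1 i) real_normK ?num_real //.
by rewrite (bigD1 j) //= lerDl sumr_ge0 // => k _; exact: sqr_ge0.
Qed.

Lemma lipschitz_coord_sqr_le m n (f : 'rV[R]_m -> 'rV[R]_n) L z j : 0 <= L ->
  (forall x y, `|f x - f y| <= L * `|x - y|) ->
  (f z - f 0) ord0 j ^+ 2 <= L ^+ 2 * \sum_k z ord0 k ^+ 2.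
Proof.
move=> L_ge0 fL.
have fz_le : `|(f z - f 0) ord0 j| <= L * `|z|.
  apply: le_trans; first exact: mx_norm_entry_le.
  by apply: le_trans (fL _ _) _; rewrite subr0.
rewrite -real_normK ?num_real //; apply: le_trans (_ : (L * `|z|) ^+ 2 <= _).
  by apply: lerXn2r; rewrite ?nnegrE ?mulr_ge0.
by rewrite exprMn ler_wpM2l ?exprn_ge0 ?mx_norm_sqr_le_sumsq.
Qed.

Lemma ln_pushforward_pdf_le s (T Tinv : 'rV[R]_s -> 'rV[R]_s) L M y j :
  cancel Tinv T -> 0 < L -> (forall x y, `|T x - T y| <= L * `|x - y|) ->
  0 < `|jacobian_det Tinv y| <= M ->
  ln (pushforward_pdf Tinv y) <=
  ln ((2 * pi) `^ (- (s%:R / 2))) + ln M - (y ord0 j - T 0 ord0 j) ^+ 2 / (2 * L ^+ 2).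
Proof.
move=> TinvK L_gt0 TL /andP[J_gt0 J_le].
rewrite /pushforward_pdf /std_normal_pdf.
set c := _ `^ _; set S := \sum_k _.
have c_gt0 : 0 < c by apply: powR_gt0; rewrite mulr_gt0 ?pi_gt0.
rewrite lnM ?posrE ?mulr_gt0 ?expR_gt0 // lnM ?posrE ?expR_gt0 // expRK.
have lnJ_le : ln `|jacobian_det Tinv y| <= ln M.
  by rewrite ler_ln ?posrE // (lt_le_trans J_gt0 J_le).
have coord_le : (y ord0 j - T 0 ord0 j) ^+ 2 <= L ^+ 2 * S.
  by have := lipschitz_coord_sqr_le (Tinv y) j (ltW L_gt0) TL; rewrite TinvK !mxE.
have L2_gt0 : 0 < L ^+ 2 by rewrite exprn_gt0.
have : (y ord0 j - T 0 ord0 j) ^+ 2 / (2 * L ^+ 2) <= S / 2.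
  rewrite ler_pdivrMr ?mulr_gt0 //.
  by rewrite (_ : S / 2 * (2 * L ^+ 2) = L ^+ 2 * S) //; field.
lra.
Qed.

Lemma expR_sqr_normal_pdf (beta m x : R) : 0 < beta ->
  expR (- (beta * (x - m) ^+ 2)) =
  (normal_peak (Num.sqrt (2 * beta)^-1))^-1 * normal_pdf m (Num.sqrt (2 * beta)^-1) x.
Proof.
move=> beta_gt0; set sigma := Num.sqrt _.
have sigma_neq0 : sigma != 0 by rewrite gt_eqF // sqrtr_gt0 invr_gt0 mulr_gt0.
have peak_gt0 : 0 < normal_peak sigma by exact: normal_peak_gt0.
rewrite /normal_pdf (negbTE sigma_neq0) mulKf ?gt_eqF // /normal_fun.
rewrite /sigma sqr_sqrtr ?invr_ge0 ?mulr_ge0 ?ltW //.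
by congr expR; field; rewrite gt_eqF.
Qed.

End gaussian_bounds.

Section iterated_integral.
Variable R : realType.
Local Open Scope ereal_scope.

(* No measurability is needed: the integral of a nonnegative function is the
   supremum of the integrals of the simple functions below it. *)
Lemma ge0_le_integral_nonmeasurable (d : measure_display) (T : measurableType d)
    (mu : {measure set T -> \bar R}) (f g : T -> \bar R) :
  (forall x, 0 <= f x) -> (forall x, f x <= g x) ->
  \int[mu]_x f x <= \int[mu]_x g x.
Proof.
move=> f_ge0 fg.
have g_ge0 x : 0 <= g x by exact: le_trans (f_ge0 x) (fg x).
rewrite !ge0_integralE //; apply: ereal_sup_le => _ [h hf <-].
by exists h => //= x; apply: le_trans (hf x) _; rewrite /patch /=; case: ifP.
Qed.

Lemma iter_lebesgue_integral_ge0 n (f : n.-tuple R -> \bar R) :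
  (forall t, 0 <= f t) -> 0 <= iter_lebesgue_integral f.
Proof.
elim: n f => [|n IH] f f_ge0 /=; first exact: f_ge0.
by apply: integral_ge0 => x _; apply: IH.
Qed.

Lemma le_iter_lebesgue_integral n (f g : n.-tuple R -> \bar R) :
  (forall t, 0 <= f t) -> (forall t, f t <= g t) ->
  iter_lebesgue_integral f <= iter_lebesgue_integral g.
Proof.
elim: n f g => [|n IH] f g f_ge0 fg /=; first exact: fg.
apply: ge0_le_integral_nonmeasurable => x.
  by apply: iter_lebesgue_integral_ge0.
by apply: IH.
Qed.

Lemma iter_lebesgue_integral_normal_pdf n (m : 'I_n -> R) (sigma c : R) :
  (0 <= c)%R ->
  iter_lebesgue_integral
    (fun t : n.-tuple R => (c * \prod_(k < n) normal_pdf (m k) sigma (tnth t k))%:E)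
  = c%:E.
Proof.
elim: n m c => [|n IH] m c c_ge0 /=; first by rewrite big_ord0 mulr1.
under eq_integral => x _.
  under eq_fun => t.
    rewrite big_ord_recl mulrA [tnth _ ord0](tnth_nth x) /=.
    under eq_bigr => k _ do rewrite tnthS.
    over.
  rewrite /= IH; last by rewrite mulr_ge0 // normal_pdf_ge0.
  rewrite EFinM.
  over.
rewrite /= ge0_integralZl_EFin //= ?integral_normal_pdf ?mule1 //.
  by move=> x _; rewrite lee_fin normal_pdf_ge0.
by apply/measurable_EFinP; exact: measurable_normal_pdf.
Qed.

Lemma iter_lebesgue_integral_normal_bound_lt_pinfty n
    (phi : 'rV[R]_n -> R) (c sigma : R) (m : 'I_n -> R) : (0 <= c)%R ->
  (forall x, `|phi x| <= c * \prod_k normal_pdf (m k) sigma (x ord0 k))%R ->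
  iter_lebesgue_integral (fun t => (`|phi (row_of_tuple t)|)%:E) < +oo.
Proof.
move=> c_ge0 phi_le.
have := ltry c; rewrite -(iter_lebesgue_integral_normal_pdf m sigma c_ge0).
apply: le_lt_trans; apply: le_iter_lebesgue_integral => t; rewrite lee_fin //.
by apply: le_trans (phi_le _) _; under eq_bigr do rewrite mxE.
Qed.

End iterated_integral.

Section patchNR_bound.
Variables (R : realType) (d s Np : nat) (idx : 'I_Np -> 'I_s -> 'I_d).
Variables (Tinv : 'rV[R]_s -> 'rV[R]_s) (C L : R) (a : 'rV[R]_s).
Variables (ik : 'I_d -> 'I_Np) (jk : 'I_d -> 'I_s).
Hypothesis L_gt0 : 0 < L.
Hypothesis ln_pdf_le :
  forall y j, ln (pushforward_pdf Tinv y) <= C - (y ord0 j - a ord0 j) ^+ 2 / (2 * L ^+ 2).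
Hypothesis idx_cover : forall k, idx (ik k) (jk k) = k.

Let sum_ln_pdf_patch_le_coord (x : 'rV[R]_d) k :
  \sum_i ln (pushforward_pdf Tinv (Defs.patch (idx i) x)) <=
  Np%:R * C - (x ord0 k - a ord0 (jk k)) ^+ 2 / (2 * L ^+ 2).
Proof.
have -> : Np%:R * C = \sum_(i < Np) C by rewrite sumr_const card_ord mulr_natl.
rewrite (bigD1 (ik k)) // [X in _ <= X - _](bigD1 (ik k)) //= addrAC lerD //.
  by have := ln_pdf_le (Defs.patch (idx (ik k)) x) (jk k); rewrite mxE idx_cover.
apply: ler_sum => i _; apply: le_trans (ln_pdf_le _ (jk k)) _.
by rewrite lerBlDr lerDl divr_ge0 ?sqr_ge0 // mulr_ge0 // exprn_ge0 // ltW.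
Qed.

Lemma sum_ln_pdf_patch_le (x : 'rV[R]_d) : (0 < d)%N ->
  \sum_i ln (pushforward_pdf Tinv (Defs.patch (idx i) x)) <=
  Np%:R * C - (\sum_k (x ord0 k - a ord0 (jk k)) ^+ 2) / (2 * L ^+ 2 * d%:R).
Proof.
move=> d_gt0; set D := \sum_i _.
have dR_gt0 : 0 < d%:R :> R by rewrite ltr0n.
have : \sum_(k < d) D <=
       \sum_(k < d) (Np%:R * C - (x ord0 k - a ord0 (jk k)) ^+ 2 / (2 * L ^+ 2)).
  by apply: ler_sum => k _; exact: sum_ln_pdf_patch_le_coord.
rewrite sumrB !sumr_const card_ord -mulr_suml => sum_le.
rewrite invfM mulrA; set X := _ / (2 * L ^+ 2) in sum_le *.
by rewrite -(ler_pM2r dR_gt0) mulrBl divfK ?gt_eqF // !mulr_natr.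
Qed.

Lemma expR_patchNR_normal_bound (rho : R) : (0 < d)%N -> (0 < s)%N -> 0 < rho ->
  exists2 c : R, 0 <= c & exists sigma : R, forall x : 'rV[R]_d,
    `|expR (- rho * patchNR idx Tinv x)| <=
    c * \prod_k normal_pdf (a ord0 (jk k)) sigma (x ord0 k).
Proof.
move=> d_gt0 s_gt0 rho_gt0.
set beta := rho / s%:R / (2 * L ^+ 2 * d%:R).
have beta_gt0 : 0 < beta by rewrite /beta !divr_gt0 ?mulr_gt0 ?exprn_gt0 ?ltr0n.
set sigma := Num.sqrt (2 * beta)^-1.
exists (expR (rho / s%:R * (Np%:R * C)) * (normal_peak sigma)^-1 ^+ d).
  by rewrite mulr_ge0 ?expR_ge0 // exprn_ge0 // invr_ge0 normal_peak_ge0.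
exists sigma => x; rewrite ger0_norm ?expR_ge0 //.
have -> : - rho * patchNR idx Tinv x =
          rho / s%:R * \sum_i ln (pushforward_pdf Tinv (Defs.patch (idx i) x)).
  by rewrite /patchNR sumrN mulrN mulrNN mulrA.
apply: le_trans (_ : expR (rho / s%:R * (Np%:R * C -
    (\sum_k (x ord0 k - a ord0 (jk k)) ^+ 2) / (2 * L ^+ 2 * d%:R))) <= _).
  by rewrite ler_expR ler_pM2l ?divr_gt0 ?ltr0n // sum_ln_pdf_patch_le.
rewrite mulrBr expRD -[X in _ <= X]mulrA ler_pM2l ?expR_gt0 //.
have -> : rho / s%:R * ((\sum_k (x ord0 k - a ord0 (jk k)) ^+ 2) / (2 * L ^+ 2 * d%:R))
        = \sum_k beta * (x ord0 k - a ord0 (jk k)) ^+ 2.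
  by rewrite -mulr_sumr /beta mulrA mulrAC.
rewrite -sumrN expR_sum; under eq_bigr do rewrite expR_sqr_normal_pdf //.
by rewrite big_split /= prodr_const card_ord.
Qed.

End patchNR_bound.

Theorem proposition1 (R : realType) (d s Np : nat)
    (T Tinv : 'rV[R]_s -> 'rV[R]_s)
    (idx : 'I_Np -> 'I_s -> 'I_d) :
  diffeomorphism T Tinv ->
  lipschitz T -> lipschitz Tinv ->
  (forall i, injective (idx i)) ->
  (forall k : 'I_d, exists i : 'I_Np, exists j : 'I_s, idx i j = k) ->
  forall rho : R, 0 < rho ->
  L1 (fun x : 'rV[R]_d => expR (- rho * patchNR idx Tinv x)).
Proof.
move=> diffT lipT lipTinv _ cover rho rho_gt0.
have [_ [TinvK [_ C1Tinv]]] := diffT.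
split.
  apply: measurableT_comp => //; apply: measurable_funM => //.
  exact: measurable_patchNR.
case: d idx cover => [|d] idx cover; first by rewrite /= ltry.
have s_gt0 : (0 < s)%N by have [i [j _]] := cover ord0; exact: leq_ltn_trans (ltn_ord j).
have /choice [ij idx_cover] : forall k, exists ij : 'I_Np * 'I_s, idx ij.1 ij.2 = k.
  by move=> k; have [i [j <-]] := cover k; exists (i, j).
have [LT LT_gt0 T_lip] := lipschitz_bound lipT.
have [LI LI_gt0 Tinv_lip] := lipschitz_bound lipTinv.
have ln_pdf_le y j := ln_pushforward_pdf_le j TinvK LT_gt0 T_lip
  (jacobian_det_inv_bound diffT (ltW LI_gt0) Tinv_lip y).
have [c c_ge0 [sigma phi_le]] :=
  expR_patchNR_normal_bound LT_gt0 ln_pdf_le idx_cover (ltn0Sn d) s_gt0 rho_gt0.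
exact: iter_lebesgue_integral_normal_bound_lt_pinfty c_ge0 phi_le.
Qed.
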